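(* Let $\varphi\colon\mathbb X\to\mathbb R$ be locally Lipschitz continuous, let $\Phi\colon\mathbb X\rightrightarrows\mathbb Y$ have closed graph, fix $\bar y\in\operatorname{Im}\Phi$, and consider the problem $\min\{\varphi(x)\mid \bar y\in\Phi(x)\}$. Let $\bar x$ be a local minimizer of this problem such that, for each critical direction $u\in\mathbb S_{\mathbb X}$ of the problem at $\bar x$, $\Phi$ is asymptotically regular at $(\bar x,\bar y)$ in direction $u$. Then $\bar x$ is M-stationary, i.e., there is $\lambda\in\mathbb Y$ with $0\in\partial\varphi(\bar x)+D^*\Phi(\bar x,\bar y)(\lambda)$.
   Context: $\mathbb X,\mathbb Y$ Euclidean spaces, $\mathbb S_{\mathbb X}$ the unit sphere. $\partial\varphi$ is the limiting (Mordukhovich) subdifferential, $\widehat D^*$ and $D^*$ are the regular and limiting coderivatives: $\widehat D^*\Phi(x,y)(y^* )=\{x^*\mid (x^*,-y^* )\in\widehat{\mathcal N}_{\operatorname{gph}\Phi}(x,y)\}$, analogously $D^*$ with the limiting normal cone. For a set-valued $\Psi$, $\operatorname{Im}\Psi=\bigcup_{z}\Psi(z)$. Critical direction: $u\in\mathbb S_{\mathbb X}$ is critical at feasible $\bar x$ if there are $u_k\to u$, $v_k\to0$, $t_k\searrow0$ with $(\bar x+t_ku_k,\bar y+t_kv_k)\in\operatorname{gph}\Phi$ for all $k$ and $\limsup_k(\varphi(\bar x+t_ku_k)-\varphi(\bar x))/t_k\le0$. Asymptotic regularity in direction $u$: $\Phi$ is asymptotically regular at $(\bar x,\bar y)\in\operatorname{gph}\Phi$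 in direction $u\in\mathbb S_{\mathbb X}$ if for all sequences $\{(x_k,y_k)\}\subset\operatorname{gph}\Phi$, $\{x_k^*\}\subset\mathbb X$, $\{\lambda_k\}\subset\mathbb Y$ and $x^*\in\mathbb X$, $y^*\in\mathbb Y$ with $x_k\notin\Phi^{-1}(\bar y)$, $y_k\ne\bar y$, $x_k^*\in\widehat D^*\Phi(x_k,y_k)(\lambda_k)$ for all $k$ and $x_k\to\bar x$, $y_k\to\bar y$, $x_k^*\to x^*$, $(x_k-\bar x)/\|x_k-\bar x\|\to u$, $(y_k-\bar y)/\|x_k-\bar x\|\to0$, $\|\lambda_k\|\to\infty$, $(y_k-\bar y)/\|y_k-\bar y\|-\lambda_k/\|\lambda_k\|\to0$, $(\|y_k-\bar y\|/\|x_k-\bar x\|)\lambda_k\to y^*$, one has $x^*\in\operatorname{Im}D^*\Phi(\bar x,\bar y)$. *)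

(* R : realType, Euclidean spaces X = 'rV[R]_n, Y = 'rV[R]_m
   with the standard inner product and Euclidean norm. *)
From HB Require Import structures.
From mathcomp Require Import all_boot all_order all_algebra.
From mathcomp Require Import all_classical all_reals all_analysis.
Set Implicit Arguments. Unset Strict Implicit. Unset Printing Implicit Defensive.
Import Order.TTheory GRing.Theory Num.Theory.
Import numFieldNormedType.Exports.
Local Open Scope ring_scope.
Local Open Scope classical_set_scope.

Section Defs.
Variable R : realType.

Definition dotv (n : nat) (u v : 'rV[R]_n) : R := \sum_(i < n) u ord0 i * v ord0 i.
Definition enorm (n : nat) (u : 'rV[R]_n) : R := Num.sqrt (dotv u u).
Definition pnorm (n m : nat) (a : 'rV[R]_n) (b : 'rV[R]_m) : R :=
  Num.sqrt (dotv a a + dotv b b).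

Definition cvgv (n : nat) (s : nat -> 'rV[R]_n) (l : 'rV[R]_n) : Prop :=
  (fun k => enorm (s k - l)) @ \oo --> (0 : R).

Definition unit_sphere (n : nat) (u : 'rV[R]_n) : Prop := enorm u = 1.

Definition locally_lipschitz (n : nat) (phi : 'rV[R]_n -> R) : Prop :=
  forall x : 'rV[R]_n, exists L : R, exists delta : R, 0 < delta /\
    forall y z : 'rV[R]_n, enorm (y - x) < delta -> enorm (z - x) < delta ->
      `|phi y - phi z| <= L * enorm (y - z).

(* A set-valued map Phi : X ⇉ Y is given by its graph relation: Phi x y <-> y ∈ Φ(x). *)
Definition closed_graph (n m : nat) (Phi : 'rV[R]_n -> 'rV[R]_m -> Prop) : Prop :=
  forall (xk : nat -> 'rV[R]_n) (yk : nat -> 'rV[R]_m) x y,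
    (forall k, Phi (xk k) (yk k)) -> cvgv xk x -> cvgv yk y -> Phi x y.

Definition reg_normal (n m : nat) (Phi : 'rV[R]_n -> 'rV[R]_m -> Prop)
    (x : 'rV[R]_n) (y : 'rV[R]_m) (xs : 'rV[R]_n) (ys : 'rV[R]_m) : Prop :=
  Phi x y /\
  forall eps : R, 0 < eps -> exists delta : R, 0 < delta /\
    forall x' y', Phi x' y' -> pnorm (x' - x) (y' - y) < delta ->
      dotv xs (x' - x) + dotv ys (y' - y) <= eps * pnorm (x' - x) (y' - y).

Definition lim_normal (n m : nat) (Phi : 'rV[R]_n -> 'rV[R]_m -> Prop)
    (x : 'rV[R]_n) (y : 'rV[R]_m) (xs : 'rV[R]_n) (ys : 'rV[R]_m) : Prop :=
  Phi x y /\
  exists (xk : nat -> 'rV[R]_n) (yk : nat -> 'rV[R]_m)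
         (xsk : nat -> 'rV[R]_n) (ysk : nat -> 'rV[R]_m),
    (forall k, reg_normal Phi (xk k) (yk k) (xsk k) (ysk k)) /\
    cvgv xk x /\ cvgv yk y /\ cvgv xsk xs /\ cvgv ysk ys.

Definition reg_coderiv (n m : nat) (Phi : 'rV[R]_n -> 'rV[R]_m -> Prop)
    (x : 'rV[R]_n) (y : 'rV[R]_m) (ys : 'rV[R]_m) (xs : 'rV[R]_n) : Prop :=
  reg_normal Phi x y xs (- ys).

Definition lim_coderiv (n m : nat) (Phi : 'rV[R]_n -> 'rV[R]_m -> Prop)
    (x : 'rV[R]_n) (y : 'rV[R]_m) (ys : 'rV[R]_m) (xs : 'rV[R]_n) : Prop :=
  lim_normal Phi x y xs (- ys).

Definition in_im_lim_coderiv (n m : nat) (Phi : 'rV[R]_n -> 'rV[R]_m -> Prop)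
    (x : 'rV[R]_n) (y : 'rV[R]_m) (xs : 'rV[R]_n) : Prop :=
  exists ys : 'rV[R]_m, lim_coderiv Phi x y ys xs.

Definition reg_subdiff (n : nat) (phi : 'rV[R]_n -> R) (x xs : 'rV[R]_n) : Prop :=
  forall eps : R, 0 < eps -> exists delta : R, 0 < delta /\
    forall x', enorm (x' - x) < delta ->
      phi x' - phi x - dotv xs (x' - x) >= - (eps * enorm (x' - x)).

Definition lim_subdiff (n : nat) (phi : 'rV[R]_n -> R) (x xs : 'rV[R]_n) : Prop :=
  exists (xk xsk : nat -> 'rV[R]_n),
    (forall k, reg_subdiff phi (xk k) (xsk k)) /\
    cvgv xk x /\ (fun k => phi (xk k)) @ \oo --> phi x /\ cvgv xsk xs.

Definition local_minimizer (n m : nat) (phi : 'rV[R]_n -> R)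
    (Phi : 'rV[R]_n -> 'rV[R]_m -> Prop) (ybar : 'rV[R]_m) (xbar : 'rV[R]_n) : Prop :=
  Phi xbar ybar /\ exists delta : R, 0 < delta /\
    forall x, Phi x ybar -> enorm (x - xbar) < delta -> phi xbar <= phi x.

Definition critical_direction (n m : nat) (phi : 'rV[R]_n -> R)
    (Phi : 'rV[R]_n -> 'rV[R]_m -> Prop) (xbar : 'rV[R]_n) (ybar : 'rV[R]_m)
    (u : 'rV[R]_n) : Prop :=
  unit_sphere u /\
  exists (uk : nat -> 'rV[R]_n) (vk : nat -> 'rV[R]_m) (tk : nat -> R),
    cvgv uk u /\ cvgv vk 0 /\ (forall k, 0 < tk k) /\ tk @ \oo --> (0 : R) /\
    (forall k, Phi (xbar + tk k *: uk k) (ybar + tk k *: vk k)) /\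
    (forall eps : R, 0 < eps -> exists N : nat, forall k, (N <= k)%N ->
       (phi (xbar + tk k *: uk k) - phi xbar) / tk k <= eps).

Definition asymp_regular (n m : nat) (Phi : 'rV[R]_n -> 'rV[R]_m -> Prop)
    (xbar : 'rV[R]_n) (ybar : 'rV[R]_m) (u : 'rV[R]_n) : Prop :=
  forall (xk : nat -> 'rV[R]_n) (yk : nat -> 'rV[R]_m) (xsk : nat -> 'rV[R]_n)
         (lamk : nat -> 'rV[R]_m) (xs : 'rV[R]_n) (ys : 'rV[R]_m),
    (forall k, Phi (xk k) (yk k)) ->
    (forall k, ~ Phi (xk k) ybar) ->
    (forall k, yk k <> ybar) ->
    (forall k, reg_coderiv Phi (xk k) (yk k) (lamk k) (xsk k)) ->
    cvgv xk xbar -> cvgv yk ybar -> cvgv xsk xs ->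
    cvgv (fun k => (enorm (xk k - xbar))^-1 *: (xk k - xbar)) u ->
    cvgv (fun k => (enorm (xk k - xbar))^-1 *: (yk k - ybar)) 0 ->
    (fun k => enorm (lamk k)) @ \oo --> +oo ->
    cvgv (fun k => (enorm (yk k - ybar))^-1 *: (yk k - ybar)
                   - (enorm (lamk k))^-1 *: lamk k) 0 ->
    cvgv (fun k => (enorm (yk k - ybar) / enorm (xk k - xbar)) *: lamk k) ys ->
    in_im_lim_coderiv Phi xbar ybar xs.

Definition M_stationary (n m : nat) (phi : 'rV[R]_n -> R)
    (Phi : 'rV[R]_n -> 'rV[R]_m -> Prop) (xbar : 'rV[R]_n) (ybar : 'rV[R]_m) : Prop :=
  exists lam : 'rV[R]_m, exists a b : 'rV[R]_n,
    lim_subdiff phi xbar a /\ lim_coderiv Phi xbar ybar lam b /\ a + b = 0.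

End Defs.

From HB Require Import structures.
From mathcomp Require Import all_boot all_order all_algebra.
From mathcomp Require Import all_classical all_reals all_analysis.
From mathcomp Require Import ring lra.

(* Penalization.  For c >= 1 minimize
     phi z + |z - xbar|^2 + c^2 |z - x|^2 + c |y - ybar|^2
   over Phi x y, with x, z near xbar and y near ybar.  Minimizers exist by compactness and,
   as c -> oo, tend to (xbar, ybar, xbar) because xbar is a local minimizer.  Fermat's rule
   at a minimizer gives a regular subgradient a = -2(z - xbar) - 2c^2(z - x) of phi at z,
   bounded by the Lipschitz constant, and 2c^2(z - x) in D^*Phi(x, y)(2c(y - ybar)) for the
   regular coderivative, so these coderivative values tend to -lim a.
   If the multipliers 2c(y - ybar) stay bounded along a subsequence, their limit makes xbar
   M-stationary.  Otherwise y <> ybar, x is infeasible, c |x - xbar| -> oo, and the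
   normalized x - xbar converge along a subsequence to a critical direction u: the penalty
   forces phi x - phi xbar = o(|x - xbar|) and y - ybar = o(|x - xbar|).  Asymptotic
   regularity in direction u then supplies the multiplier. *)

Set Implicit Arguments. Unset Strict Implicit. Unset Printing Implicit Defensive.
Import Order.TTheory GRing.Theory Num.Theory.
Import numFieldNormedType.Exports.
Local Open Scope ring_scope.
Local Open Scope classical_set_scope.

(** * Euclidean geometry of row vectors *)

Section Euclidean.
Variable R : realType.
Implicit Types (n : nat) (a : R).

Lemma dotvC n (u v : 'rV[R]_n) : dotv u v = dotv v u.
Proof. by apply: eq_bigr => i _; rewrite mulrC. Qed.

Lemma dotvDl n (u v w : 'rV[R]_n) : dotv (u + v) w = dotv u w + dotv v w.
Proof. by rewrite /dotv -big_split; apply: eq_bigr => i _; rewrite !mxE mulrDl. Qed.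

Lemma dotvZl n a (u w : 'rV[R]_n) : dotv (a *: u) w = a * dotv u w.
Proof. by rewrite /dotv mulr_sumr; apply: eq_bigr => i _; rewrite !mxE mulrA. Qed.

Lemma dotvNl n (u w : 'rV[R]_n) : dotv (- u) w = - dotv u w.
Proof. by rewrite -scaleN1r dotvZl mulN1r. Qed.

Lemma dotvBl n (u v w : 'rV[R]_n) : dotv (u - v) w = dotv u w - dotv v w.
Proof. by rewrite dotvDl dotvNl. Qed.

Lemma dotvDr n (u v w : 'rV[R]_n) : dotv w (u + v) = dotv w u + dotv w v.
Proof. by rewrite !(dotvC w) dotvDl. Qed.

Lemma dotvZr n a (u w : 'rV[R]_n) : dotv w (a *: u) = a * dotv w u.
Proof. by rewrite !(dotvC w) dotvZl. Qed.

Lemma dotvBr n (u v w : 'rV[R]_n) : dotv w (u - v) = dotv w u - dotv w v.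
Proof. by rewrite !(dotvC w) dotvBl. Qed.

Lemma dotv0l n (w : 'rV[R]_n) : dotv 0 w = 0.
Proof. by rewrite /dotv big1 // => i _; rewrite mxE mul0r. Qed.

Lemma dotv0r n (w : 'rV[R]_n) : dotv w 0 = 0.
Proof. by rewrite dotvC dotv0l. Qed.

Lemma dotvDD n (u v : 'rV[R]_n) :
  dotv (u + v) (u + v) = dotv u u + 2 * dotv u v + dotv v v.
Proof. by rewrite !dotvDl !dotvDr (dotvC v u); ring. Qed.

Lemma dotvBB n (u v : 'rV[R]_n) :
  dotv (u - v) (u - v) = dotv u u - 2 * dotv u v + dotv v v.
Proof. by rewrite !dotvBl !dotvBr (dotvC v u); ring. Qed.

Lemma dotv_ge0 n (u : 'rV[R]_n) : 0 <= dotv u u.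
Proof. by rewrite sumr_ge0 // => i _; exact: sqr_ge0. Qed.

Lemma dotv_eq0 n (u : 'rV[R]_n) : dotv u u = 0 -> u = 0.
Proof.
move=> /eqP; rewrite psumr_eq0 => [/allP u0|i _]; last exact: sqr_ge0.
apply/rowP => i; rewrite mxE.
by have /u0 := mem_index_enum i; rewrite /= mulf_eq0 orbb => /eqP.
Qed.

Lemma sqr_coord_le_dotv n (u : 'rV[R]_n) i : u ord0 i ^+ 2 <= dotv u u.
Proof.
rewrite /dotv (bigD1 i) //= -expr2 lerDl.
by rewrite sumr_ge0 // => j _; exact: sqr_ge0.
Qed.

Lemma dotv_le_sqr_sum n (u : 'rV[R]_n) : dotv u u <= (\sum_i `|u ord0 i|) ^+ 2.
Proof.
rewrite expr2 mulr_suml; apply: ler_sum => i _.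
rewrite mulr_sumr (bigD1 i) //= -normrM ger0_norm -?expr2 ?sqr_ge0 // lerDl.
by rewrite sumr_ge0.
Qed.

Lemma enorm_ge0 n (u : 'rV[R]_n) : 0 <= enorm u.
Proof. exact: sqrtr_ge0. Qed.

Lemma enorm_sqr n (u : 'rV[R]_n) : enorm u ^+ 2 = dotv u u.
Proof. by rewrite sqr_sqrtr // dotv_ge0. Qed.

Lemma enorm_le n (u : 'rV[R]_n) a : 0 <= a -> dotv u u <= a ^+ 2 -> enorm u <= a.
Proof. by move=> a0; rewrite -enorm_sqr ler_pXn2r ?nnegrE ?enorm_ge0. Qed.

Lemma enorm_lt n (u : 'rV[R]_n) a : 0 <= a -> dotv u u < a ^+ 2 -> enorm u < a.
Proof. by move=> a0; rewrite -enorm_sqr ltr_pXn2r ?nnegrE ?enorm_ge0. Qed.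

Lemma cauchy_schwarz n (u v : 'rV[R]_n) : dotv u v <= enorm u * enorm v.
Proof.
have [v0|v_neq0] := eqVneq (dotv v v) 0.
  by rewrite (dotv_eq0 v0) dotv0r mulr_ge0 ?enorm_ge0.
have v_gt0 : 0 < dotv v v by rewrite lt_neqAle eq_sym v_neq0 dotv_ge0.
suff h : dotv u v ^+ 2 <= (enorm u * enorm v) ^+ 2.
  rewrite (le_trans (ler_norm _)) // -(ler_pXn2r (_ : (0 < 2)%N)) //;
    by rewrite ?nnegrE ?mulr_ge0 ?enorm_ge0 // real_normK ?num_real.
rewrite exprMn !enorm_sqr.
have := dotv_ge0 (dotv v v *: u - dotv u v *: v).
rewrite dotvBB !dotvZl !dotvZr ?(dotvC v u) => h.
rewrite -(ler_pM2l v_gt0); nra.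
Qed.

Lemma enormD n (u v : 'rV[R]_n) : enorm (u + v) <= enorm u + enorm v.
Proof.
apply: enorm_le; first by rewrite addr_ge0 ?enorm_ge0.
rewrite dotvDD sqrrD !enorm_sqr mulr2n.
have := cauchy_schwarz u v; lra.
Qed.

Lemma enormZ n a (u : 'rV[R]_n) : enorm (a *: u) = `|a| * enorm u.
Proof. by rewrite /enorm dotvZl dotvZr mulrA -expr2 sqrtrM ?sqr_ge0 // sqrtr_sqr. Qed.

Lemma enormN n (u : 'rV[R]_n) : enorm (- u) = enorm u.
Proof. by rewrite -scaleN1r enormZ normrN1 mul1r. Qed.

Lemma enorm_distC n (u v : 'rV[R]_n) : enorm (u - v) = enorm (v - u).
Proof. by rewrite -enormN opprB. Qed.

Lemma enorm0 n : enorm (0 : 'rV[R]_n) = 0.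
Proof. by rewrite /enorm dotv0l sqrtr0. Qed.

Lemma enorm_eq0 n (u : 'rV[R]_n) : enorm u = 0 -> u = 0.
Proof. by move=> u0; apply: dotv_eq0; rewrite -enorm_sqr u0 expr0n. Qed.

Lemma enorm_gt0 n (u : 'rV[R]_n) : u != 0 -> 0 < enorm u.
Proof.
by move=> u_neq0; rewrite lt_neqAle enorm_ge0 andbT; apply: contra u_neq0 => /eqP/esym/enorm_eq0 ->.
Qed.

Lemma enormB n (u v : 'rV[R]_n) : enorm (u - v) <= enorm u + enorm v.
Proof. by rewrite -(enormN v) (le_trans _ (enormD _ _)). Qed.

Lemma enorm_split n (u v w : 'rV[R]_n) :
  enorm (u - w) <= enorm (u - v) + enorm (v - w).
Proof. by rewrite (le_trans _ (enormD _ _)) // addrA subrK. Qed.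

Lemma lerB_enorm n (u v : 'rV[R]_n) : enorm u - enorm v <= enorm (u - v).
Proof. by rewrite lerBlDr (le_trans _ (enormD _ _)) // subrK. Qed.

Lemma enorm_le_add n (u v : 'rV[R]_n) a : enorm (u - v) <= a -> enorm u <= a + enorm v.
Proof. by move=> uv; rewrite -lerBlDr (le_trans (lerB_enorm _ _)). Qed.

Lemma norm_coord_le_enorm n (u : 'rV[R]_n) i : `|u ord0 i| <= enorm u.
Proof. by rewrite -sqrtr_sqr ler_sqrt ?dotv_ge0 // sqr_coord_le_dotv. Qed.

Lemma enorm_le_sum n (u : 'rV[R]_n) : enorm u <= \sum_i `|u ord0 i|.
Proof. by apply: enorm_le; [rewrite sumr_ge0 | apply: dotv_le_sqr_sum]. Qed.

Lemma pnorm_sqr n m (u : 'rV[R]_n) (v : 'rV[R]_m) :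
  pnorm u v ^+ 2 = dotv u u + dotv v v.
Proof. by rewrite sqr_sqrtr // addr_ge0 ?dotv_ge0. Qed.

Lemma pnorm_ge0 n m (u : 'rV[R]_n) (v : 'rV[R]_m) : 0 <= pnorm u v.
Proof. exact: sqrtr_ge0. Qed.

Lemma enorm_le_pnorml n m (u : 'rV[R]_n) (v : 'rV[R]_m) : enorm u <= pnorm u v.
Proof. by rewrite ler_sqrt ?lerDl ?addr_ge0 ?dotv_ge0. Qed.

Lemma enorm_le_pnormr n m (u : 'rV[R]_n) (v : 'rV[R]_m) : enorm v <= pnorm u v.
Proof. by rewrite ler_sqrt ?lerDr ?addr_ge0 ?dotv_ge0. Qed.

End Euclidean.

(** * Subsequences and convergence of vector sequences *)

Section Subsequences.
Implicit Types f g : nat -> nat.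

Lemma increasing_seq_comp f g : increasing_seq f -> increasing_seq g -> increasing_seq (f \o g).
Proof. by move=> hf hg j k; rewrite /= hf; exact: hg. Qed.

Lemma increasing_seq_addn N : increasing_seq (addn^~ N).
Proof. by move=> j k; exact: leq_add2r. Qed.

Lemma increasing_seq_cvgy f : increasing_seq f -> f @ \oo --> \oo.
Proof.
move=> hf P [N _ HN]; exists N => // k /= hk.
by apply: HN; rewrite /= (leq_trans hk) // unstable.mono_leq_infl.
Qed.

Lemma cvg_subseq (T : Type) (F : set_system T) (u : nat -> T) f :
  increasing_seq f -> u @ \oo --> F -> (u \o f) @ \oo --> F.
Proof. by move=> /increasing_seq_cvgy; apply: cvg_comp. Qed.

Lemma not_near_subseq (P : nat -> Prop) :
  ~ (\forall k \near \oo, P k) -> exists2 f, increasing_seq f & forall k, ~ P (f k).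
Proof.
move=> nP; have /boolp.choice[g hg] : forall N, exists k, (N <= k)%N /\ ~ P k.
  move=> N; apply: contrapT => nk; apply: nP; exists N => // k /= Nk.
  by apply: contrapT => nPk; apply: nk; exists k.
pose fix f k := if k is k'.+1 then g (f k').+1 else g 0%N.
exists f; last by case=> [|k]; [case: (hg 0%N) | case: (hg (f k).+1)].
by apply/increasing_seqP => k; case: (hg (f k).+1).
Qed.

End Subsequences.

Section VectorSequences.
Variable R : realType.
Implicit Types (n : nat) (f : nat -> nat).

Lemma cvgvP n (s : nat -> 'rV[R]_n) l :
  cvgv s l <-> forall eps, 0 < eps -> \forall k \near \oo, enorm (s k - l) < eps.
Proof.
rewrite /cvgv cvgrPdist_lt.
by split=> h e /h; apply: filterS => k; rewrite sub0r normrN ger0_norm ?enorm_ge0.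
Qed.

Lemma cvgv_subseq n (s : nat -> 'rV[R]_n) l f :
  increasing_seq f -> cvgv s l -> cvgv (s \o f) l.
Proof. exact: cvg_subseq. Qed.

Lemma cvgv_coordP n (s : nat -> 'rV[R]_n) l :
  cvgv s l <-> forall i, (fun k => s k ord0 i) @ \oo --> l ord0 i.
Proof.
split=> [/cvgvP sl i|sl].
  apply/cvgrPdist_lt => e /sl; apply: filterS => k.
  by apply: le_lt_trans; rewrite distrC (le_trans _ (norm_coord_le_enorm _ i)) // !mxE.
apply/cvgvP => e e_gt0.
have e'_gt0 : 0 < e / (n.+1)%:R by rewrite divr_gt0.
have /filter_forall : forall i, \forall k \near \oo, `|l ord0 i - s k ord0 i| < e / (n.+1)%:R.
  by move=> i; move/cvgrPdist_lt: (sl i); apply.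
apply: filterS => k near_k; apply: le_lt_trans (enorm_le_sum _) _.
apply: (@le_lt_trans _ _ (\sum_(i < n) e / (n.+1)%:R)).
  by apply: ler_sum => i _; rewrite !mxE distrC ltW.
rewrite sumr_const card_ord -[_ *+ n]mulr_natr mulrAC ltr_pdivrMr ?ltr0n //.
by rewrite ltr_pM2l ?ltr_nat.
Qed.

Lemma cvgv_cst n (a : 'rV[R]_n) : cvgv (fun _ => a) a.
Proof. by rewrite /cvgv subrr enorm0; apply: cvg_cst. Qed.

Lemma cvgvD n (s t : nat -> 'rV[R]_n) a b :
  cvgv s a -> cvgv t b -> cvgv (fun k => s k + t k) (a + b).
Proof.
move=> /cvgv_coordP sa /cvgv_coordP tb; apply/cvgv_coordP => i.
by under eq_fun do rewrite mxE; rewrite mxE; apply: cvgD.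
Qed.

Lemma cvgvN n (s : nat -> 'rV[R]_n) a : cvgv s a -> cvgv (fun k => - s k) (- a).
Proof.
move=> /cvgv_coordP sa; apply/cvgv_coordP => i.
by under eq_fun do rewrite mxE; rewrite mxE; apply: cvgN.
Qed.

Lemma cvgvB n (s t : nat -> 'rV[R]_n) a b :
  cvgv s a -> cvgv t b -> cvgv (fun k => s k - t k) (a - b).
Proof. by move=> sa /cvgvN; apply: cvgvD. Qed.

Lemma cvgvZ n (c : nat -> R) (s : nat -> 'rV[R]_n) (a : R) b :
  c @ \oo --> a -> cvgv s b -> cvgv (fun k => c k *: s k) (a *: b).
Proof.
move=> ca /cvgv_coordP sb; apply/cvgv_coordP => i.
by under eq_fun do rewrite mxE; rewrite mxE; apply: cvgM.
Qed.

Lemma cvgv_enorm n (s : nat -> 'rV[R]_n) a :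
  cvgv s a -> (fun k => enorm (s k)) @ \oo --> enorm a.
Proof.
move=> /cvgvP sa; apply/cvgrPdist_lt => e /sa; apply: filterS => k; apply: le_lt_trans.
have := lerB_enorm (s k) a; have := lerB_enorm a (s k); rewrite enorm_distC.
by rewrite ler_norml; lra.
Qed.

Lemma cvgv_dotv n (s : nat -> 'rV[R]_n) a :
  cvgv s a -> (fun k => dotv (s k) (s k)) @ \oo --> dotv a a.
Proof.
move=> /cvgv_enorm sa; rewrite -enorm_sqr; under eq_fun do rewrite -enorm_sqr.
exact: cvgM.
Qed.

Lemma cvgv_enorm_le n (s : nat -> 'rV[R]_n) a b B :
  (forall k, enorm (s k - b) <= B) -> cvgv s a -> enorm (a - b) <= B.
Proof.
move=> sB sa; have := cvgv_enorm (cvgvB sa (cvgv_cst b)).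
by move/ler_cvg_to => /(_ _ _ (cvg_cst B)); apply; apply: nearW.
Qed.

Lemma cvgv0_dotv_le n (s : nat -> 'rV[R]_n) (w : nat -> R) :
  (\forall k \near \oo, dotv (s k) (s k) <= w k) -> w @ \oo --> 0 -> cvgv s 0.
Proof.
move=> sw /cvgrPdist_lt w0; apply/cvgvP => e e_gt0.
have /w0 : 0 < e ^+ 2 by rewrite exprn_gt0.
apply: filterS2 sw => k skw; rewrite sub0r normrN subr0 => wk.
by apply: enorm_lt; [exact: ltW | exact: le_lt_trans skw (le_lt_trans (ler_norm _) wk)].
Qed.

Lemma bolzano_weierstrass_rV n (s : nat -> 'rV[R]_n) M :
  (forall k, enorm (s k) <= M) -> exists2 f, increasing_seq f & exists l, cvgv (s \o f) l.
Proof.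
move=> sM.
have coord_bounded (f : nat -> nat) i : bounded_fun (fun k => s (f k) ord0 i).
  exists M; split; first exact: num_real.
  by move=> x Mx y _ /=; rewrite (le_trans (norm_coord_le_enorm _ i)) // (le_trans (sM _)) // ltW.
suff : exists2 f, increasing_seq f & forall i : 'I_n,
    exists a : R, (fun k => s (f k) ord0 i) @ \oo --> a.
  case=> f hf /boolp.choice[a ha].
  by exists f => //; exists (\row_i a i); apply/cvgv_coordP => i; rewrite mxE.
suff: forall j, exists2 f, increasing_seq f & forall i : 'I_n, (i < j)%N ->
    exists a : R, (fun k => s (f k) ord0 i) @ \oo --> a.
  by case/(_ n) => f hf fcvg; exists f => // i; apply: fcvg.
elim=> [|j [f hf fcvg]]; first by exists id.
have [jn|nj] := ltnP j n; last by exists f => // i ij; apply: fcvg (leq_trans _ nj).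
have [g hg /cvg_ex[a ga]] := bolzano_weierstrass (coord_bounded f (Ordinal jn)).
exists (f \o g); first exact: increasing_seq_comp.
move=> i; rewrite ltnS leq_eqVlt => /orP[/eqP ij|ij].
  by exists a; have -> : i = Ordinal jn by apply: val_inj.
by have [b fb] := fcvg i ij; exists b; apply: (cvg_subseq hg fb).
Qed.

End VectorSequences.

Lemma exists_gt0_lt_min (R : realFieldType) (a b : R) :
  0 < a -> 0 < b -> exists s : R, [/\ 0 < s, s < a & s < b].
Proof.
move=> a_gt0 b_gt0; have m_gt0 : 0 < Num.min a b by rewrite lt_min a_gt0.
have : Num.min a b / 2 < Num.min a b by rewrite ltr_pdivrMr // ltr_pMr ?ltr1n.
by rewrite lt_min => /andP[]; exists (Num.min a b / 2); split; rewrite ?divr_gt0.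
Qed.

Lemma reg_subdiff_enorm_le (R : realType) n (phi : 'rV[R]_n -> R) (z a : 'rV[R]_n) (L rho : R) :
  0 <= L -> 0 < rho ->
  (forall y, enorm (y - z) < rho -> phi y - phi z <= L * enorm (y - z)) ->
  reg_subdiff phi z a -> enorm a <= L.
Proof.
move=> L_ge0 rho_gt0 phi_lip a_subgrad.
have [->|a_neq0] := eqVneq a 0; first by rewrite enorm0.
have a_gt0 := enorm_gt0 a_neq0.
apply/ler_addgt0Pr => eps eps_gt0.
have [delta [delta_gt0 near_z]] := a_subgrad eps eps_gt0.
(* test the subgradient inequality at [z + t a] with [|t a| = s] small *)
have [s [s_gt0 s_delta s_rho]] := exists_gt0_lt_min delta_gt0 rho_gt0.
pose t := s / enorm a.
have ta_norm : enorm ((z + t *: a) - z) = s.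
  by rewrite /t addrAC subrr add0r enormZ gtr0_norm ?divr_gt0 // divfK ?gt_eqF.
have ta_dot : dotv a ((z + t *: a) - z) = s * enorm a.
  by rewrite addrAC subrr add0r dotvZr -enorm_sqr /t expr2 mulrA divfK ?gt_eqF.
have := near_z (z + t *: a); rewrite ta_norm ta_dot => /(_ s_delta) sub_ge.
have := phi_lip (z + t *: a); rewrite ta_norm => /(_ s_rho) phi_le.
have : s * enorm a <= s * (L + eps) by lra.
by rewrite ler_pM2l.
Qed.

(** * The penalized problems *)

Section Penalty.
Variable R : realType.
Variables (n m : nat) (phi : 'rV[R]_n -> R) (Phi : 'rV[R]_n -> 'rV[R]_m -> Prop).
Variables (xbar : 'rV[R]_n) (ybar : 'rV[R]_m) (L r : R).
Hypotheses (r_gt0 : 0 < r) (L_gt0 : 0 < L).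
Hypothesis phi_lipschitz : forall y z, enorm (y - xbar) <= r -> enorm (z - xbar) <= r ->
  `|phi y - phi z| <= L * enorm (y - z).
Hypothesis xbar_feasible : Phi xbar ybar.
Hypothesis xbar_min : forall x, Phi x ybar -> enorm (x - xbar) <= r -> phi xbar <= phi x.
Hypothesis Phi_closed : closed_graph Phi.

Local Notation sqn v := (dotv v v).

Definition penalty_dom x y z :=
  [/\ Phi x y, enorm (x - xbar) <= r, enorm (y - ybar) <= 1 & enorm (z - xbar) <= r].

Definition penalty (c : R) x y z :=
  phi z + sqn (z - xbar) + c ^+ 2 * sqn (z - x) + c * sqn (y - ybar).

Definition penalty_argmin c x y z := penalty_dom x y z /\
  forall x' y' z', penalty_dom x' y' z' -> penalty c x y z <= penalty c x' y' z'.

Lemma penalty_dom_xbar : penalty_dom xbar ybar xbar.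
Proof. by split; rewrite // !subrr enorm0 ltW. Qed.

Lemma phi_ge_ball z : enorm (z - xbar) <= r -> phi xbar - L * r <= phi z.
Proof.
move=> zr; have := phi_lipschitz zr (_ : enorm (xbar - xbar) <= r).
rewrite subrr enorm0 ltW // ler_norml => /(_ isT) /andP[phi_lo _].
have : L * enorm (z - xbar) <= L * r by rewrite ler_pM2l.
lra.
Qed.

Lemma phi_cvg (s : nat -> 'rV[R]_n) a : (forall k, enorm (s k - xbar) <= r) ->
  enorm (a - xbar) <= r -> cvgv s a -> (fun k => phi (s k)) @ \oo --> phi a.
Proof.
move=> sr ar /cvgvP sa; apply/cvgrPdist_lt => e e_gt0.
apply: filterS (sa _ (divr_gt0 e_gt0 L_gt0)) => k ska.
by rewrite distrC (le_lt_trans (phi_lipschitz (sr k) ar)) // -ltr_pdivlMl // mulrC.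
Qed.

Lemma penalty_dom_closed (X : nat -> 'rV[R]_n) (Y : nat -> 'rV[R]_m) Z x y z :
  (forall k, penalty_dom (X k) (Y k) (Z k)) -> cvgv X x -> cvgv Y y -> cvgv Z z ->
  penalty_dom x y z.
Proof.
move=> dom Xx Yy Zz; split.
- by apply: Phi_closed Xx Yy => k; case: (dom k).
- by apply: cvgv_enorm_le Xx => k; case: (dom k).
- by apply: cvgv_enorm_le Yy => k; case: (dom k).
- by apply: cvgv_enorm_le Zz => k; case: (dom k).
Qed.

Lemma penalty_cvg c (X : nat -> 'rV[R]_n) (Y : nat -> 'rV[R]_m) Z x y z :
  (forall k, penalty_dom (X k) (Y k) (Z k)) -> cvgv X x -> cvgv Y y -> cvgv Z z ->
  (fun k => penalty c (X k) (Y k) (Z k)) @ \oo --> penalty c x y z.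
Proof.
move=> dom Xx Yy Zz; have [_ _ _ zr] := penalty_dom_closed dom Xx Yy Zz.
have Zr k : enorm (Z k - xbar) <= r by case: (dom k).
apply: cvgD; [apply: cvgD; [apply: cvgD|]|].
- exact: phi_cvg.
- exact: cvgv_dotv (cvgvB Zz (cvgv_cst xbar)).
- exact: cvgM (cvg_cst _) (cvgv_dotv (cvgvB Zz Xx)).
- exact: cvgM (cvg_cst _) (cvgv_dotv (cvgvB Yy (cvgv_cst ybar))).
Qed.

Lemma penalty_dom_compact (X : nat -> 'rV[R]_n) (Y : nat -> 'rV[R]_m) Z :
  (forall k, penalty_dom (X k) (Y k) (Z k)) -> exists2 f, increasing_seq f &
    exists x y z, [/\ cvgv (X \o f) x, cvgv (Y \o f) y, cvgv (Z \o f) z & penalty_dom x y z].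
Proof.
move=> dom.
have Xr k : enorm (X k) <= r + enorm xbar by apply: enorm_le_add; case: (dom k).
have Y1 k : enorm (Y k) <= 1 + enorm ybar by apply: enorm_le_add; case: (dom k).
have Zr k : enorm (Z k) <= r + enorm xbar by apply: enorm_le_add; case: (dom k).
have [f1 f1_incr [x Xx]] := bolzano_weierstrass_rV Xr.
have [f2 f2_incr [y Yy]] := bolzano_weierstrass_rV (fun k => Y1 (f1 k)).
have [f3 f3_incr [z Zz]] := bolzano_weierstrass_rV (fun k => Zr (f1 (f2 k))).
have f_incr := increasing_seq_comp (increasing_seq_comp f1_incr f2_incr) f3_incr.
have Xx' : cvgv (X \o (f1 \o f2 \o f3)) x.
  exact: cvgv_subseq (increasing_seq_comp f2_incr f3_incr) Xx.
have Yy' : cvgv (Y \o (f1 \o f2 \o f3)) y by exact: cvgv_subseq f3_incr Yy.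
exists (f1 \o f2 \o f3) => //; exists x, y, z; split => //.
by apply: (penalty_dom_closed (Z := Z \o (f1 \o f2 \o f3))) Xx' Yy' Zz => k; apply: dom.
Qed.

Lemma penalty_ge c x y z : 0 <= c -> penalty_dom x y z -> phi xbar - L * r <= penalty c x y z.
Proof.
move=> c_ge0 [_ _ _ zr]; rewrite /penalty.
have := phi_ge_ball zr; have := dotv_ge0 (z - xbar).
have : 0 <= c ^+ 2 * sqn (z - x) by rewrite mulr_ge0 ?sqr_ge0 ?dotv_ge0.
have : 0 <= c * sqn (y - ybar) by rewrite mulr_ge0 ?dotv_ge0.
lra.
Qed.

Lemma penalty_argmin_exists c : 0 <= c -> exists x y z, penalty_argmin c x y z.
Proof.
move=> c_ge0.
pose V := [set t | exists x y z, penalty_dom x y z /\ t = penalty c x y z].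
have V_lb : has_lbound V by exists (phi xbar - L * r) => _ [x [y [z [dom ->]]]]; exact: penalty_ge.
have V_inf : has_inf V.
  by split=> //; exists (penalty c xbar ybar xbar), xbar, ybar, xbar; split => //; exact: penalty_dom_xbar.
have /boolp.choice[P P_near] : forall k : nat, exists p : 'rV[R]_n * 'rV[R]_m * 'rV[R]_n,
    penalty_dom p.1.1 p.1.2 p.2 /\ penalty c p.1.1 p.1.2 p.2 < inf V + k.+1%:R^-1.
  move=> k; have k_gt0 : 0 < k.+1%:R^-1 :> R by rewrite invr_gt0.
  have [_ [x [y [z [dom ->]]]] lt_inf] := inf_adherent k_gt0 V_inf.
  by exists (x, y, z).
have dom k := (P_near k).1.
have [f f_incr [x [y [z [Xx Yy Zz xyz_dom]]]]] := penalty_dom_compact dom.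
exists x, y, z; split => // x' y' z' dom'.
apply: le_trans (ge_inf V_lb _); last by exists x', y', z'.
have lim_inf : (fun k => inf V + (f k).+1%:R^-1) @ \oo --> inf V.
  rewrite -[inf V in X in _ --> X]addr0; apply: cvgD (cvg_cst _) _.
  exact: (cvg_subseq (u := fun k => k.+1%:R^-1) f_incr cvg_harmonic).
apply: ler_cvg_to (penalty_cvg (fun k => dom (f k)) Xx Yy Zz) lim_inf _.
by apply: nearW => k; exact: ltW (P_near (f k)).2.
Qed.

Lemma penalty_argmin_decrease c x y z : penalty_argmin c x y z ->
  sqn (z - xbar) + c ^+ 2 * sqn (z - x) + c * sqn (y - ybar) <= phi xbar - phi z.
Proof.
case=> _ /(_ _ _ _ penalty_dom_xbar); rewrite /penalty !subrr !dotv0l !mulr0 !addr0.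
lra.
Qed.

(* Fermat's rule for [penalty c] at a minimizer: the negated partial gradients of its smooth
   part give a regular subgradient of [phi] at [z] and a regular normal
   [(coderiv_val, - multiplier)] to the graph of [Phi] at [(x, y)]. *)
Definition subgrad c (x z : 'rV[R]_n) := - (2 *: (z - xbar) + (2 * c ^+ 2) *: (z - x)).
Definition coderiv_val c (x z : 'rV[R]_n) := (2 * c ^+ 2) *: (z - x).
Definition multiplier c (y : 'rV[R]_m) := (2 * c) *: (y - ybar).

Lemma subgradD_coderiv_val c x z :
  subgrad c x z + coderiv_val c x z = - (2 *: (z - xbar)).
Proof. by rewrite /subgrad /coderiv_val opprD addrNK. Qed.

Lemma penalty_argmin_subgrad c x y z : penalty_argmin c x y z -> 0 <= c ->
  enorm (z - xbar) < r -> reg_subdiff phi z (subgrad c x z).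
Proof.
move=> [[Pxy xr yr zr] z_min] c_ge0 z_in eps eps_gt0.
have c2_gt0 : 0 < 1 + c ^+ 2 by rewrite ltr_pwDl ?sqr_ge0.
exists (Num.min (r - enorm (z - xbar)) (eps / (1 + c ^+ 2))); split.
  by rewrite lt_min subr_gt0 z_in divr_gt0.
move=> z'; rewrite lt_min => /andP[z'_in z'_near].
have z'r : enorm (z' - xbar) <= r.
  by rewrite (le_trans (enorm_split _ z _)) // -lerBrDr ltW.
have := z_min _ _ _ (And4 Pxy xr yr z'r); rewrite /penalty.
have -> : z' - xbar = (z' - z) + (z - xbar) by rewrite addrA subrK.
have -> : z' - x = (z' - z) + (z - x) by rewrite addrA subrK.
rewrite (dotvDD (z' - z) (z - xbar)) (dotvDD (z' - z) (z - x)).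
rewrite /subgrad dotvNl (dotvDl (2 *: _)) !dotvZl (dotvC (z - xbar) (z' - z)) (dotvC (z - x) (z' - z)).
have : (1 + c ^+ 2) * sqn (z' - z) <= eps * enorm (z' - z).
  rewrite -enorm_sqr expr2 mulrA ler_wpM2r ?enorm_ge0 //.
  by rewrite mulrC -ler_pdivlMr // ltW.
lra.
Qed.

Lemma penalty_argmin_coderiv c x y z : penalty_argmin c x y z -> 1 <= c ->
  enorm (x - xbar) < r -> enorm (y - ybar) < 1 ->
  reg_coderiv Phi x y (multiplier c y) (coderiv_val c x z).
Proof.
move=> [[Pxy _ _ zr] xyz_min] c_ge1 x_in y_in; split=> // eps eps_gt0.
have c2_gt0 : 0 < c ^+ 2 by rewrite exprn_gt0 // (lt_le_trans ltr01).
exists (Num.min (Num.min (r - enorm (x - xbar)) (1 - enorm (y - ybar))) (eps / c ^+ 2)).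
split; first by rewrite !lt_min !subr_gt0 x_in y_in divr_gt0.
move=> x' y' Px'y'; rewrite !lt_min => /andP[/andP[x'_near y'_near] p_small].
set p := pnorm (x' - x) (y' - y) in x'_near y'_near p_small *.
have := enorm_le_pnorml (x' - x) (y' - y); have := enorm_le_pnormr (x' - x) (y' - y).
rewrite -/p => y'_le x'_le.
have x'r : enorm (x' - xbar) <= r by rewrite (le_trans (enorm_split _ x _)) // -lerBrDr; lra.
have y'1 : enorm (y' - ybar) <= 1 by rewrite (le_trans (enorm_split _ y _)) // -lerBrDr; lra.
have := xyz_min _ _ _ (And4 Px'y' x'r y'1 zr); rewrite /penalty.
have -> : z - x' = (z - x) - (x' - x) by rewrite opprB addrA subrK.
have -> : y' - ybar = (y' - y) + (y - ybar) by rewrite addrA subrK.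
rewrite (dotvBB (z - x) (x' - x)) (dotvDD (y' - y) (y - ybar)).
rewrite /coderiv_val /multiplier dotvNl !dotvZl (dotvC (y - ybar) (y' - y)).
have p_sqr : sqn (x' - x) + sqn (y' - y) = p ^+ 2 by rewrite pnorm_sqr.
have : c * sqn (y' - y) <= c ^+ 2 * sqn (y' - y).
  by rewrite ler_wpM2r ?dotv_ge0 // expr2 ler_peMl // (le_trans ler01).
have : c ^+ 2 * p ^+ 2 <= eps * p.
  rewrite expr2 mulrA ler_wpM2r ?pnorm_ge0 //.
  by rewrite mulrC -ler_pdivlMr // ltW.
have : c ^+ 2 * (sqn (x' - x) + sqn (y' - y)) = c ^+ 2 * sqn (x' - x) + c ^+ 2 * sqn (y' - y).
  exact: mulrDr.
rewrite p_sqr; lra.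
Qed.

Lemma penalty_argmin_infeasible c x y z : penalty_argmin c x y z -> 0 < c -> y != ybar ->
  ~ Phi x ybar.
Proof.
move=> [[_ xr _ zr] xyz_min] c_gt0 y_neq Pxybar.
have := xyz_min _ _ _ (And4 Pxybar xr _ zr); rewrite subrr enorm0 ler01 => /(_ isT).
rewrite /penalty subrr dotv0l mulr0 addr0 => le_pen.
have : c * sqn (y - ybar) <= 0 by lra.
rewrite pmulr_rle0 // => y_le0; move/eqP: y_neq; apply.
by apply: subr0_eq; apply: dotv_eq0; apply/eqP; rewrite eq_le y_le0 dotv_ge0.
Qed.

Lemma penalty_argmin_subgrad_bound c x y z : penalty_argmin c x y z -> 0 <= c ->
  enorm (z - xbar) < r -> enorm (subgrad c x z) <= L.
Proof.
move=> xyz_min c_ge0 z_in.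
apply: (reg_subdiff_enorm_le (rho := r - enorm (z - xbar)) (ltW L_gt0) _ _
  (penalty_argmin_subgrad xyz_min c_ge0 z_in)).
  by rewrite subr_gt0.
move=> z' z'_near; have [_ _ _ zr] := xyz_min.1.
have z'r : enorm (z' - xbar) <= r by rewrite (le_trans (enorm_split _ z _)) // -lerBrDr ltW.
by have := phi_lipschitz z'r zr; rewrite ler_norml => /andP[].
Qed.

Lemma argmins_gaps_cvg0 (X : nat -> 'rV[R]_n) (Y : nat -> 'rV[R]_m) Z c :
  (forall k, penalty_argmin (c k) (X k) (Y k) (Z k)) -> (forall k, 1 <= c k) ->
  c @ \oo --> +oo -> cvgv (fun k => Z k - X k) 0 /\ cvgv (fun k => Y k - ybar) 0.
Proof.
move=> xyz_min c_ge1 c_cvgy.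
have c_gt0 k : 0 < c k by apply: lt_le_trans (c_ge1 k).
have gap k : c k * sqn (Z k - X k) + c k * sqn (Y k - ybar) <= L * r.
  have [_ _ _ zr] := (xyz_min k).1.
  have := penalty_argmin_decrease (xyz_min k); have := phi_ge_ball zr.
  have : c k * sqn (Z k - X k) <= c k ^+ 2 * sqn (Z k - X k).
    by rewrite ler_wpM2r ?dotv_ge0 // expr2 ler_peMl // ltW.
  have := dotv_ge0 (Z k - xbar); lra.
have Lr_c : (fun k => L * r / c k) @ \oo --> 0.
  rewrite -(mulr0 (L * r)); apply: cvgM (cvg_cst _) _.
  by apply/gtr0_cvgV0 => //; apply: nearW.
have small d (s : nat -> 'rV[R]_d) : (forall k, c k * sqn (s k) <= L * r) -> cvgv s 0.
  move=> s_le; apply: cvgv0_dotv_le Lr_c; apply: nearW => k.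
  by rewrite ler_pdivlMr // mulrC.
split; apply: small => k; have := gap k.
  have : 0 <= c k * sqn (Y k - ybar) by rewrite mulr_ge0 ?dotv_ge0 ?ltW.
  lra.
have : 0 <= c k * sqn (Z k - X k) by rewrite mulr_ge0 ?dotv_ge0 ?ltW.
lra.
Qed.

Lemma argmins_cvg_xbar (X : nat -> 'rV[R]_n) (Y : nat -> 'rV[R]_m) Z c z :
  (forall k, penalty_argmin (c k) (X k) (Y k) (Z k)) -> (forall k, 1 <= c k) ->
  c @ \oo --> +oo -> cvgv Z z -> [/\ cvgv X xbar, cvgv Y ybar & z = xbar].
Proof.
move=> xyz_min c_ge1 c_cvgy Zz.
have [ZX Y0] := argmins_gaps_cvg0 xyz_min c_ge1 c_cvgy.
have Xz : cvgv X z.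
  have -> : X = fun k => Z k - (Z k - X k) by apply: funext => k; rewrite opprB addrC subrK.
  by rewrite -[z]subr0; exact: cvgvB.
have Yy : cvgv Y ybar.
  have -> : Y = fun k => (Y k - ybar) + ybar by apply: funext => k; rewrite subrK.
  by rewrite -[ybar in cvgv _ ybar]add0r; exact: cvgvD Y0 (cvgv_cst _).
have dom k := (xyz_min k).1.
have Zr k : enorm (Z k - xbar) <= r by case: (dom k).
have [Pz zr _ _] := penalty_dom_closed dom Xz Yy Zz.
have decr : sqn (z - xbar) <= phi xbar - phi z.
  have phiZ : (fun k => phi xbar - phi (Z k)) @ \oo --> phi xbar - phi z.
    exact: cvgB (cvg_cst _) (phi_cvg Zr zr Zz).
  apply: ler_cvg_to (cvgv_dotv (cvgvB Zz (cvgv_cst xbar))) phiZ _.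
  apply: nearW => k; have := penalty_argmin_decrease (xyz_min k).
  have : 0 <= c k ^+ 2 * sqn (Z k - X k) by rewrite mulr_ge0 ?sqr_ge0 ?dotv_ge0.
  have : 0 <= c k * sqn (Y k - ybar).
    by rewrite mulr_ge0 ?dotv_ge0 // (le_trans ler01 (c_ge1 k)).
  lra.
have z_eq : z = xbar.
  apply: subr0_eq; apply: dotv_eq0.
  have := xbar_min Pz zr; have := dotv_ge0 (z - xbar); lra.
by split => //; rewrite -z_eq.
Qed.

Record approx_minimizers (X : nat -> 'rV[R]_n) (Y : nat -> 'rV[R]_m) Z (c : nat -> R) : Prop := {
  am_argmin : forall k, penalty_argmin (c k) (X k) (Y k) (Z k);
  am_c_ge1 : forall k, 1 <= c k;
  am_x_in : forall k, enorm (X k - xbar) < r;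
  am_y_in : forall k, enorm (Y k - ybar) < 1;
  am_z_in : forall k, enorm (Z k - xbar) < r;
  am_x_cvg : cvgv X xbar;
  am_y_cvg : cvgv Y ybar;
  am_z_cvg : cvgv Z xbar }.

Lemma approx_minimizers_subseq X Y Z c f : increasing_seq f ->
  approx_minimizers X Y Z c -> approx_minimizers (X \o f) (Y \o f) (Z \o f) (c \o f).
Proof.
move=> f_incr [xyz_min c_ge1 x_in y_in z_in Xx Yy Zz].
split=> [k|k|k|k|k|||]; [exact: xyz_min|exact: c_ge1|exact: x_in|exact: y_in|exact: z_in|..].
- exact: cvgv_subseq f_incr Xx.
- exact: cvgv_subseq f_incr Yy.
- exact: cvgv_subseq f_incr Zz.
Qed.

Lemma approx_minimizers_exist : exists X Y Z c, approx_minimizers X Y Z c.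
Proof.
have /boolp.choice[P P_min] : forall k : nat, exists p : 'rV[R]_n * 'rV[R]_m * 'rV[R]_n,
    penalty_argmin k.+1%:R p.1.1 p.1.2 p.2.
  by move=> k; have [x [y [z xyz_min]]] := penalty_argmin_exists (ler0n R k.+1); exists (x, y, z).
have Zr k : enorm (P k).2 <= r + enorm xbar.
  by apply: enorm_le_add; case: (P_min k) => -[].
have [f f_incr [z Zz]] := bolzano_weierstrass_rV Zr.
pose X k := (P (f k)).1.1; pose Y k := (P (f k)).1.2; pose Z k := (P (f k)).2.
pose c k : R := (f k).+1%:R.
have c_ge1 k : 1 <= c k by rewrite ler1n.
have c_cvgy : c @ \oo --> +oo.
  apply: (cvg_subseq (u := fun k => k.+1%:R) f_incr).
  by apply: ger_cvgy cvgr_idn; apply: nearW => k; rewrite ler_nat.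
have [Xx Yy z_eq] := argmins_cvg_xbar (fun k => P_min (f k)) c_ge1 c_cvgy Zz.
rewrite z_eq in Zz.
(* only finitely many minimizers lie on the boundary of the penalty domain: drop them *)
have /cvgvP/(_ _ r_gt0) Xr := Xx; have /cvgvP/(_ _ ltr01) Y1 := Yy.
have /cvgvP/(_ _ r_gt0) Zr' := Zz.
have [N _ N_in] := filterI Xr (filterI Y1 Zr').
have in_k k : [/\ enorm (X (k + N)%N - xbar) < r, enorm (Y (k + N)%N - ybar) < 1
    & enorm (Z (k + N)%N - xbar) < r].
  by have [? []] := N_in (k + N)%N (leq_addl _ _); split.
have shift_incr := increasing_seq_addn N.
exists (X \o addn^~ N), (Y \o addn^~ N), (Z \o addn^~ N), (c \o addn^~ N).
split=> [k|k|k|k|k|||];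
  [exact: P_min|exact: c_ge1|by case: (in_k k)|by case: (in_k k)|by case: (in_k k)|..].
- exact: cvgv_subseq shift_incr Xx.
- exact: cvgv_subseq shift_incr Yy.
- exact: cvgv_subseq shift_incr Zz.
Qed.

Section Limits.
Variables (X : nat -> 'rV[R]_n) (Y : nat -> 'rV[R]_m) (Z : nat -> 'rV[R]_n) (c : nat -> R).
Variable a : 'rV[R]_n.
Hypothesis XYZ : approx_minimizers X Y Z c.
Hypothesis subgrad_cvg : cvgv (fun k => subgrad (c k) (X k) (Z k)) a.

Lemma approx_lim_subdiff : lim_subdiff phi xbar a.
Proof.
have [xyz_min c_ge1 _ _ z_in _ _ Zx] := XYZ.
exists Z, (fun k => subgrad (c k) (X k) (Z k)); split=> //.
  by move=> k; apply: penalty_argmin_subgrad (xyz_min k) (le_trans ler01 (c_ge1 k)) (z_in k).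
split=> //; split=> //; apply: (phi_cvg _ _ Zx) => [k|]; first exact: ltW.
by rewrite subrr enorm0 ltW.
Qed.

Lemma approx_coderiv_val_cvg : cvgv (fun k => coderiv_val (c k) (X k) (Z k)) (- a).
Proof.
have -> : (fun k => coderiv_val (c k) (X k) (Z k)) =
    (fun k => - (2 *: (Z k - xbar)) - subgrad (c k) (X k) (Z k)).
  by apply: funext => k; rewrite -(subgradD_coderiv_val (c k) (X k)) addrAC subrr add0r.
have Zx := cvgvB (am_z_cvg XYZ) (cvgv_cst xbar); rewrite subrr in Zx.
have Zx2 : cvgv (fun k => 2 *: (Z k - xbar)) 0.
  by rewrite -(scaler0 _ 2); apply: cvgvZ (cvg_cst _) Zx.
by rewrite -[- a]sub0r -oppr0; apply: cvgvB (cvgvN Zx2) subgrad_cvg.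
Qed.
End Limits.

Lemma M_stationary_of_bounded_multipliers X Y Z c a M :
  approx_minimizers X Y Z c -> cvgv (fun k => subgrad (c k) (X k) (Z k)) a ->
  (forall k, enorm (multiplier (c k) (Y k)) <= M) -> M_stationary phi Phi xbar ybar.
Proof.
move=> XYZ subgrad_cvg lam_bd.
have [f f_incr [lam lam_cvg]] := bolzano_weierstrass_rV lam_bd.
have [xyz_min c_ge1 x_in y_in _ Xx Yy _] := approx_minimizers_subseq f_incr XYZ.
have subgrad_f := cvgv_subseq f_incr subgrad_cvg.
exists lam, a, (- a); split; last split; last by rewrite subrr.
  exact: approx_lim_subdiff (approx_minimizers_subseq f_incr XYZ) subgrad_f.
split; first exact: xbar_feasible.
exists (X \o f), (Y \o f), (fun k => coderiv_val (c (f k)) (X (f k)) (Z (f k))),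
  (fun k => - multiplier (c (f k)) (Y (f k))).
split; first by move=> k; exact: penalty_argmin_coderiv (xyz_min k) (c_ge1 k) (x_in k) (y_in k).
do 3!split=> //; last exact: cvgvN lam_cvg.
exact: approx_coderiv_val_cvg (approx_minimizers_subseq f_incr XYZ) subgrad_f.
Qed.

(** * Estimates at a minimizer and unbounded multipliers *)

Local Notation K := (L + r).

Section AtMinimizer.
Variables (c : R) (x : 'rV[R]_n) (y : 'rV[R]_m) (z : 'rV[R]_n).
Hypotheses (xyz_min : penalty_argmin c x y z) (c_ge1 : 1 <= c).
Hypotheses (x_in : enorm (x - xbar) < r) (z_in : enorm (z - xbar) < r).

Let c_gt0 : 0 < c. Proof. exact: lt_le_trans ltr01 c_ge1. Qed.

Lemma argmin_phi_le : phi z <= phi xbar.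
Proof.
have := penalty_argmin_decrease xyz_min; have := dotv_ge0 (z - xbar).
have : 0 <= c ^+ 2 * sqn (z - x) by rewrite mulr_ge0 ?sqr_ge0 ?dotv_ge0.
have : 0 <= c * sqn (y - ybar) by rewrite mulr_ge0 ?dotv_ge0 ?ltW.
lra.
Qed.

Lemma argmin_y_gap : c * enorm (y - ybar) ^+ 2 <= L * (enorm (x - xbar) + enorm (z - x)).
Proof.
have := penalty_argmin_decrease xyz_min; rewrite -(enorm_sqr (y - ybar)).
have := dotv_ge0 (z - xbar).
have : 0 <= c ^+ 2 * sqn (z - x) by rewrite mulr_ge0 ?sqr_ge0 ?dotv_ge0.
have := phi_lipschitz (ltW z_in) (_ : enorm (xbar - xbar) <= r).
rewrite subrr enorm0 ltW // ler_norml => /(_ isT) /andP[phi_lo _].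
have : L * enorm (z - xbar) <= L * (enorm (z - x) + enorm (x - xbar)).
  by rewrite ler_pM2l // enorm_split.
lra.
Qed.

Lemma argmin_sqr_c_zx_le : c ^+ 2 * enorm (z - x) <= K.
Proof.
have a_le := penalty_argmin_subgrad_bound xyz_min (ltW c_gt0) z_in.
have coderiv_eq : coderiv_val c x z = - (2 *: (z - xbar)) - subgrad c x z.
  by rewrite -(subgradD_coderiv_val c x) addrAC subrr add0r.
have := enormB (- (2 *: (z - xbar))) (subgrad c x z).
rewrite -coderiv_eq /coderiv_val enormN !enormZ !ger0_norm ?sqr_ge0 ?mulr_ge0 ?(ltW c_gt0) //.
have : 2 * c ^+ 2 * enorm (z - x) = 2 * (c ^+ 2 * enorm (z - x)) by ring.
have := L_gt0; have := z_in; lra.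
Qed.

Lemma argmin_c_zx_le : c * enorm (z - x) <= K.
Proof.
apply: le_trans _ argmin_sqr_c_zx_le; rewrite ler_wpM2r ?enorm_ge0 //.
by rewrite expr2 ler_peMl ?(ltW c_gt0).
Qed.

Lemma enorm_multiplier : enorm (multiplier c y) = 2 * c * enorm (y - ybar).
Proof. by rewrite enormZ ger0_norm // mulr_ge0 // (ltW c_gt0). Qed.

Lemma argmin_scaled_dist_ge (M : R) :
  `|4 * L * (M + K)| + 1 < enorm (multiplier c y) -> M <= c * enorm (x - xbar).
Proof.
(* |multiplier|^2 = 4 c (c |y - ybar|^2) <= 4 L (c |x - xbar|) + 4 L K *)
set T := `|4 * L * (M + K)| + 1 => T_lt.
have T_ge1 : 1 <= T by rewrite lerDr.
have : T * T < enorm (multiplier c y) ^+ 2 by rewrite expr2 ltr_pM // (le_trans ler01).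
rewrite enorm_multiplier (_ : (2 * c * _) ^+ 2 = 4 * c * (c * enorm (y - ybar) ^+ 2)); last by ring.
have : c * (c * enorm (y - ybar) ^+ 2) <= c * (L * (enorm (x - xbar) + enorm (z - x))).
  exact: ler_wpM2l (ltW c_gt0) _ _ argmin_y_gap.
have : L * (c * enorm (z - x)) <= L * K by exact: ler_wpM2l (ltW L_gt0) _ _ argmin_c_zx_le.
have : 4 * L * (M + K) <= T by rewrite (le_trans (ler_norm _)) // lerDl.
have : T <= T * T by rewrite ler_peMl // (le_trans ler01).
move=> *; have : L * M <= L * (c * enorm (x - xbar)) by lra.
by rewrite ler_pM2l.
Qed.

Hypotheses (lam_gt0 : 0 < enorm (multiplier c y)) (kappa_ge1 : 1 <= c * enorm (x - xbar)).

Lemma argmin_x_dist_gt0 : 0 < enorm (x - xbar).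
Proof.
rewrite lt_neqAle enorm_ge0 andbT; apply/eqP => x0.
by move: kappa_ge1; rewrite -x0 mulr0 ler10.
Qed.

Lemma argmin_y_dist_gt0 : 0 < enorm (y - ybar).
Proof.
rewrite lt_neqAle enorm_ge0 andbT; apply/eqP => y0.
by move: lam_gt0; rewrite enorm_multiplier -y0 mulr0 ltxx.
Qed.

Local Notation e := (enorm (x - xbar)).

Lemma argmin_zx_le : enorm (z - x) <= K * e.
Proof.
have : 1 <= c ^+ 2 * e.
  by apply: le_trans kappa_ge1 _; rewrite expr2 -mulrA ler_peMl ?mulr_ge0 ?enorm_ge0 ?(ltW c_gt0).
have := argmin_sqr_c_zx_le; have := enorm_ge0 (z - x); have := argmin_x_dist_gt0.
set d := enorm (z - x); set ex := enorm (x - xbar) => ex_gt0 d_ge0 gap ge1.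
have : d * 1 <= d * (c ^+ 2 * ex) by exact: ler_wpM2l d_ge0 _ _ ge1.
have : c ^+ 2 * d * ex <= K * ex by exact: ler_wpM2r (ltW ex_gt0) _ _ gap.
have : d * (c ^+ 2 * ex) = c ^+ 2 * d * ex by ring.
lra.
Qed.

Lemma rescaled_y_bound : (c * e) ^+ 2 * sqn (e^-1 *: (y - ybar)) <= L * (c * e) + L * K.
Proof.
have e_gt0 := argmin_x_dist_gt0.
rewrite dotvZl dotvZr -enorm_sqr.
have -> : (c * e) ^+ 2 * (e^-1 * (e^-1 * enorm (y - ybar) ^+ 2)) =
    c * (c * enorm (y - ybar) ^+ 2) by field; rewrite gt_eqF.
have : c * (c * enorm (y - ybar) ^+ 2) <= c * (L * (e + enorm (z - x))).
  exact: ler_wpM2l (ltW c_gt0) _ _ argmin_y_gap.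
have : L * (c * enorm (z - x)) <= L * K by exact: ler_wpM2l (ltW L_gt0) _ _ argmin_c_zx_le.
have : c * (L * (e + enorm (z - x))) = L * (c * e) + L * (c * enorm (z - x)) by ring.
lra.
Qed.

Lemma rescaled_multiplier_bound :
  enorm ((enorm (y - ybar) / e) *: multiplier c y) <= 2 * L + 2 * L * K.
Proof.
have e_gt0 := argmin_x_dist_gt0.
rewrite enormZ enorm_multiplier ger0_norm ?divr_ge0 ?enorm_ge0 // -(ler_pM2r e_gt0).
have -> : enorm (y - ybar) / e * (2 * c * enorm (y - ybar)) * e =
    2 * (c * enorm (y - ybar) ^+ 2) by field; rewrite gt_eqF.
have : L * enorm (z - x) <= L * (K * e) by exact: ler_wpM2l (ltW L_gt0) _ _ argmin_zx_le.
have : (2 * L + 2 * L * K) * e = 2 * L * e + 2 * (L * (K * e)) by ring.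
have := argmin_y_gap; lra.
Qed.

Lemma argmin_phi_decrease (eps : R) : 0 < eps -> L * K / eps <= c * e ->
  phi x - phi xbar <= eps * e.
Proof.
move=> eps_gt0 kappa_ge.
have : L * K <= eps * (c * e).
  by move: kappa_ge; rewrite ler_pdivrMr // [eps * _]mulrC.
have : phi x - phi z <= L * enorm (z - x).
  by have := phi_lipschitz (ltW x_in) (ltW z_in); rewrite ler_norml enorm_distC => /andP[].
have : c * (L * enorm (z - x)) <= L * (c ^+ 2 * enorm (z - x)).
  rewrite [X in _ <= X](_ : _ = c * (L * enorm (z - x)) * c); last by ring.
  by rewrite ler_peMr // mulr_ge0 ?(ltW c_gt0) // mulr_ge0 ?enorm_ge0 ?(ltW L_gt0).
have : L * (c ^+ 2 * enorm (z - x)) <= L * K by exact: ler_wpM2l (ltW L_gt0) _ _ argmin_sqr_c_zx_le.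
have := argmin_phi_le; move=> *.
have : c * (L * enorm (z - x)) <= c * (eps * e).
  have : eps * (c * e) = c * (eps * e) by ring.
  lra.
rewrite ler_pM2l //; lra.
Qed.

Lemma multiplier_direction :
  (enorm (y - ybar))^-1 *: (y - ybar) = (enorm (multiplier c y))^-1 *: multiplier c y.
Proof.
have y_gt0 := argmin_y_dist_gt0.
rewrite enorm_multiplier /multiplier scalerA; congr (_ *: _).
by field; rewrite !gt_eqF.
Qed.

End AtMinimizer.

Lemma scaled_dist_cvgy X Y Z c : approx_minimizers X Y Z c ->
  (fun k => enorm (multiplier (c k) (Y k))) @ \oo --> +oo ->
  (fun k => c k * enorm (X k - xbar)) @ \oo --> +oo.
Proof.
move=> [xyz_min c_ge1 x_in _ z_in _ _ _] /cvgryPgt lam_cvgy; apply/cvgryPge => M.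
apply: filterS (lam_cvgy (`|4 * L * (M + K)| + 1)) => k.
exact: argmin_scaled_dist_ge (xyz_min k) (c_ge1 k) (z_in k) M.
Qed.

Hypothesis Phi_asymp_regular : forall u, critical_direction phi Phi xbar ybar u ->
  asymp_regular Phi xbar ybar u.

Section Tail.
Variables (X : nat -> 'rV[R]_n) (Y : nat -> 'rV[R]_m) (Z : nat -> 'rV[R]_n) (c : nat -> R).
Hypothesis XYZ : approx_minimizers X Y Z c.
Hypothesis lam_gt0 : forall k, 0 < enorm (multiplier (c k) (Y k)).
Hypothesis kappa_ge1 : forall k, 1 <= c k * enorm (X k - xbar).
Hypothesis kappa_cvgy : (fun k => c k * enorm (X k - xbar)) @ \oo --> +oo.

Local Notation e k := (enorm (X k - xbar)).

Let e_gt0 k : 0 < e k. Proof. exact: argmin_x_dist_gt0 (kappa_ge1 k). Qed.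

Lemma rescaled_y_cvg0 : cvgv (fun k => (e k)^-1 *: (Y k - ybar)) 0.
Proof.
have [xyz_min c_ge1 _ _ z_in _ _ _] := XYZ.
have kappa_gt0 k : 0 < c k * e k by apply: lt_le_trans (kappa_ge1 k).
have kappa_inv0 : (fun k => (c k * e k)^-1) @ \oo --> 0.
  by apply/gtr0_cvgV0 => //; apply: nearW.
apply: (cvgv0_dotv_le (w := fun k => L * (c k * e k)^-1 +
    L * K * ((c k * e k)^-1 * (c k * e k)^-1))); last first.
  rewrite -[0](_ : L * 0 + L * K * (0 * 0) = 0); last by rewrite !mulr0 addr0.
  by apply: cvgD; apply: cvgM (cvg_cst _) _ => //; apply: cvgM.
apply: nearW => k; rewrite -(ler_pM2l (exprn_gt0 2 (kappa_gt0 k))).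
apply: le_trans (rescaled_y_bound (xyz_min k) (c_ge1 k) (z_in k) (kappa_ge1 k)) _.
rewrite [leRHS](_ : _ = L * (c k * e k) + L * K) //.
by field; rewrite !gt_eqF ?e_gt0 // (lt_le_trans ltr01 (c_ge1 k)).
Qed.

Lemma critical_direction_of_tail u :
  cvgv (fun k => (e k)^-1 *: (X k - xbar)) u -> critical_direction phi Phi xbar ybar u.
Proof.
move=> Xu; have [xyz_min c_ge1 x_in _ z_in Xx _ _] := XYZ.
have unit_k k : enorm ((e k)^-1 *: (X k - xbar)) = 1.
  by rewrite enormZ ger0_norm ?invr_ge0 ?enorm_ge0 // mulVf // gt_eqF.
split.
  have := cvgv_enorm Xu; rewrite (funext unit_k) => norm_cvg.
  apply/eqP; rewrite eq_le (ler_cvg_to norm_cvg (cvg_cst (1 : R))) //.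
    by rewrite (ler_cvg_to (cvg_cst (1 : R)) norm_cvg) //; apply: nearW.
  by apply: nearW.
exists (fun k => (e k)^-1 *: (X k - xbar)), (fun k => (e k)^-1 *: (Y k - ybar)),
  (fun k => e k).
split=> //; split; first exact: rescaled_y_cvg0.
split=> [k|]; first exact: e_gt0.
split; first exact: Xx.
have X_eq k : xbar + e k *: ((e k)^-1 *: (X k - xbar)) = X k.
  by rewrite scalerKV ?gt_eqF // subrKC.
split=> [k|eps eps_gt0].
  by rewrite X_eq scalerKV ?gt_eqF // subrKC; case: (xyz_min k) => -[].
have [N _ N_ge] := cvgry_ge kappa_cvgy (L * K / eps).
exists N => k /N_ge kappa_ge; rewrite X_eq ler_pdivrMr //.
exact (argmin_phi_decrease (xyz_min k) (c_ge1 k) (x_in k) (z_in k) eps_gt0 kappa_ge).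
Qed.

Lemma M_stationary_of_tail a u ys :
  cvgv (fun k => subgrad (c k) (X k) (Z k)) a ->
  (fun k => enorm (multiplier (c k) (Y k))) @ \oo --> +oo ->
  cvgv (fun k => (e k)^-1 *: (X k - xbar)) u ->
  cvgv (fun k => (enorm (Y k - ybar) / e k) *: multiplier (c k) (Y k)) ys ->
  M_stationary phi Phi xbar ybar.
Proof.
move=> subgrad_cvg lam_cvgy Xu lam_ys.
have [xyz_min c_ge1 x_in y_in z_in Xx Yy _] := XYZ.
have y_neq k : Y k != ybar.
  have := argmin_y_dist_gt0 (c_ge1 k) (lam_gt0 k).
  by apply: contraTneq => ->; rewrite subrr enorm0 ltxx.
have direction_cvg0 : cvgv (fun k => (enorm (Y k - ybar))^-1 *: (Y k - ybar) -
    (enorm (multiplier (c k) (Y k)))^-1 *: multiplier (c k) (Y k)) 0.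
  rewrite (_ : (fun k => _) = fun _ => 0); first exact: cvgv_cst.
  by apply: funext => k; rewrite (multiplier_direction (c_ge1 k) (lam_gt0 k)) subrr.
have Pxy k : Phi (X k) (Y k) by case: (xyz_min k) => -[].
have x_infeasible k : ~ Phi (X k) ybar.
  exact: penalty_argmin_infeasible (xyz_min k) (lt_le_trans ltr01 (c_ge1 k)) (y_neq k).
have [lam lam_coderiv] := Phi_asymp_regular (critical_direction_of_tail Xu) Pxy x_infeasible
  (fun k => elimN eqP (y_neq k))
  (fun k => penalty_argmin_coderiv (xyz_min k) (c_ge1 k) (x_in k) (y_in k))
  Xx Yy (approx_coderiv_val_cvg XYZ subgrad_cvg) Xu rescaled_y_cvg0 lam_cvgy direction_cvg0 lam_ys.
exists lam, a, (- a); split; first exact: approx_lim_subdiff XYZ subgrad_cvg.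
by split; last by rewrite subrr.
Qed.
End Tail.

Lemma M_stationary_of_unbounded_multipliers X Y Z c a :
  approx_minimizers X Y Z c -> cvgv (fun k => subgrad (c k) (X k) (Z k)) a ->
  (fun k => enorm (multiplier (c k) (Y k))) @ \oo --> +oo -> M_stationary phi Phi xbar ybar.
Proof.
move=> XYZ subgrad_cvg lam_cvgy.
have kappa_cvgy := scaled_dist_cvgy XYZ lam_cvgy.
have [N _ N_tail] := filterI (cvgry_gt lam_cvgy 0) (cvgry_ge kappa_cvgy 1).
have tail k : 0 < enorm (multiplier (c (k + N)%N) (Y (k + N)%N)) /\
    1 <= c (k + N)%N * enorm (X (k + N)%N - xbar) by apply: N_tail; rewrite /= leq_addl.
have [xyz_min c_ge1 _ _ z_in _ _ _] := XYZ.
have dir_bound k : enorm ((enorm (X (k + N)%N - xbar))^-1 *: (X (k + N)%N - xbar)) <= 1.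
  have := argmin_x_dist_gt0 (tail k).2 => e_gt0.
  by rewrite enormZ ger0_norm ?invr_ge0 ?enorm_ge0 // mulVf // gt_eqF.
have [f f_incr [u Xu]] := bolzano_weierstrass_rV dir_bound.
pose g k := (f k + N)%N.
have lam_bound k : enorm ((enorm (Y (g k) - ybar) / enorm (X (g k) - xbar)) *:
    multiplier (c (g k)) (Y (g k))) <= 2 * L + 2 * L * K.
  exact: rescaled_multiplier_bound (xyz_min _) (c_ge1 _) (z_in _) (tail (f k)).2.
have [h h_incr [ys lam_ys]] := bolzano_weierstrass_rV lam_bound.
have gh_incr : increasing_seq (g \o h).
  exact: increasing_seq_comp (increasing_seq_comp (increasing_seq_addn N) f_incr) h_incr.
apply: (@M_stationary_of_tail (X \o (g \o h)) (Y \o (g \o h)) (Z \o (g \o h)) (c \o (g \o h))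
  (approx_minimizers_subseq gh_incr XYZ) _ _ (cvg_subseq gh_incr kappa_cvgy) a u ys).
- by move=> k; exact: (tail (f (h k))).1.
- by move=> k; exact: (tail (f (h k))).2.
- exact: cvgv_subseq gh_incr subgrad_cvg.
- exact: cvg_subseq gh_incr lam_cvgy.
- exact: cvgv_subseq h_incr Xu.
- exact: lam_ys.
Qed.

Lemma M_stationary_of_local_min : M_stationary phi Phi xbar ybar.
Proof.
have [X [Y [Z [c XYZ]]]] := approx_minimizers_exist.
have [xyz_min c_ge1 _ _ z_in _ _ _] := XYZ.
have subgrad_bound k : enorm (subgrad (c k) (X k) (Z k)) <= L.
  exact: penalty_argmin_subgrad_bound (xyz_min k) (le_trans ler01 (c_ge1 k)) (z_in k).
have [f f_incr [a subgrad_cvg]] := bolzano_weierstrass_rV subgrad_bound.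
have XYZf := approx_minimizers_subseq f_incr XYZ.
have [lam_cvgy|] := boolp.pselect ((fun k => enorm (multiplier (c (f k)) (Y (f k)))) @ \oo --> +oo).
  exact: M_stationary_of_unbounded_multipliers XYZf subgrad_cvg lam_cvgy.
move/cvgryPgt => /boolp.existsNP[M /not_near_subseq[g g_incr lam_le]].
apply: (M_stationary_of_bounded_multipliers (M := M)
  (approx_minimizers_subseq g_incr XYZf) (cvgv_subseq g_incr subgrad_cvg)).
by move=> k; rewrite leNgt; apply/negP; exact: lam_le.
Qed.

End Penalty.


Theorem mainTheorem2 (R : realType) (n m : nat) (phi : 'rV[R]_n -> R)
    (Phi : 'rV[R]_n -> 'rV[R]_m -> Prop) (ybar : 'rV[R]_m) (xbar : 'rV[R]_n) :
  locally_lipschitz phi ->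
  closed_graph Phi ->
  (exists x, Phi x ybar) ->
  local_minimizer phi Phi ybar xbar ->
  (forall u : 'rV[R]_n, critical_direction phi Phi xbar ybar u ->
     asymp_regular Phi xbar ybar u) ->
  M_stationary phi Phi xbar ybar.
Proof.
move=> phi_lip Phi_closed _ [xbar_feasible [d1 [d1_gt0 xbar_min]]] Phi_reg.
have [L0 [d0 [d0_gt0 L0_lip]]] := phi_lip xbar.
have [r [r_gt0 r_d0 r_d1]] := exists_gt0_lt_min d0_gt0 d1_gt0.
apply: (M_stationary_of_local_min (L := `|L0| + 1) r_gt0 _ _ xbar_feasible _ Phi_closed Phi_reg).
- by rewrite ltr_pwDr.
- move=> y z yr zr; apply: le_trans (L0_lip y z (le_lt_trans yr r_d0) (le_lt_trans zr r_d0)) _.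
  by rewrite ler_wpM2r ?enorm_ge0 // (le_trans (ler_norm L0)) // lerDl.
- by move=> x Pxybar xr; apply: xbar_min (le_lt_trans xr r_d1).
Qed.
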